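(* The sequence $\langle\{P_n\}_{n\in\mathbb{N}},\{p^m_k\}_{k<m}\rangle$, where $P_n=\{0,1,2,3\}^n$ with order $\le_n$ and $p^m_k$ is restriction to the first $k$ coordinates, is a Fraïssé sequence in the category of finite posets with quotient maps; i.e. (U) for every finite poset $X$ there are $n$ and a quotient map $P_n\to X$; and (A) for every $k\in\mathbb{N}$, every finite poset $Y$ and every quotient map $f:Y\to P_k$ there exist $\ell>k$ and a quotient map $g:P_\ell\to Y$ with $f\circ g=p^\ell_k$.
   Context: $x\le_n y$ iff $x=y$ or (i) there is $l<n$ with $x(k)=y(k)$ for $k<l$, $x(l)=2$, $y(l)=3$, and $x(k)=y(k)\in\{0,1\}$ for $l<k<n$; or (ii) $x(0)=0$, $y(0)=1$ and $x(k)=y(k)\in\{0,1\}$ for $1\le k<n$ (coordinates indexed $0,\dots,n-1$). A quotient map between posets is a surjective order-preserving map $\phi:A\to B$ such that for all $p\le r$ in $B$ there are $x\le y$ in $A$ with $\phi(x)=p$, $\phi(y)=r$. *)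

From mathcomp Require Import all_boot.
Set Implicit Arguments. Unset Strict Implicit. Unset Printing Implicit Defensive.

Definition is_poset (T : finType) (le : rel T) : Prop :=
  [/\ reflexive le, antisymmetric le & transitive le].

Definition quotient_map (A B : finType) (leA : rel A) (leB : rel B)
  (phi : A -> B) : Prop :=
  [/\ (forall b : B, exists a : A, phi a = b),
      (forall x y : A, leA x y -> leB (phi x) (phi y)) &
      (forall p r : B, leB p r ->
         exists x y : A, [/\ leA x y, phi x = p & phi y = r])].

Definition P (n : nat) : finType := {ffun 'I_n -> 'I_4}.

Definition leq_P (n : nat) (x y : P n) : bool :=
  (x == y)
  || [exists l : 'I_n,
        [forall k : 'I_n, (k < l) ==> (x k == y k)]
        && (val (x l) == 2) && (val (y l) == 3)
        && [forall k : 'I_n, (l < k) ==> ((x k == y k) && (val (x k) < 2))]]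
  || ([exists i0 : 'I_n, (val i0 == 0) && (val (x i0) == 0) && (val (y i0) == 1)]
      && [forall k : 'I_n, (0 < val k) ==> ((x k == y k) && (val (x k) < 2))]).

Definition restr (k m : nat) (H : k <= m) (x : P m) : P k :=
  [ffun i : 'I_k => x (widen_ord H i)].

From mathcomp Require Import all_boot zify.
Set Implicit Arguments. Unset Strict Implicit. Unset Printing Implicit Defensive.

(* The strict part of [<=_n] is a matching without chains: [x < y] exactly
   when [x] and [y] differ only at the last coordinate [p] carrying a digit
   [>= 2] (or at [p = 0] when there is none), where [x] has the even digit and
   [y] the next odd one.  Hence any quotient map [f : Y -> P_k] has a monotone
   section, chosen independently on each comparable pair of [P_k], and it can
   be forced through any pair [y <= y'] with [f y < f y'].
   For amalgamation, append one coordinate for every pair [(y, y')] of [Y].  A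
   tail whose last digit [>= 2] sits at position [j] lifts to the [j]-th pair
   when it lies in one fibre (digit 2 to [y], digit 3 to [y']); a 0/1 tail with
   a 1 at position [i > 0] lifts along the section through the [i]-th pair.
   Each relation of [Y] is realised by one of these two kinds of tails, and
   universality is amalgamation over the one-point poset [P_0]. *)

Section OrderOfP.
Variable n : nat.
Implicit Types (x y z : P n) (p : 'I_n).

Definition top_at x p :=
  (forall i : 'I_n, p < i -> x i < 2) /\ (1 < x p \/ (p : nat) = 0).
Definition lower_at x p := top_at x p /\ ~~ odd (x p).
Definition upper_at x p := top_at x p /\ odd (x p).
Definition lt_at x y p :=
  [/\ forall i, i != p -> y i = x i, lower_at x p & (y p : nat) = (x p).+1].

Lemma top_at_inj x p p' : top_at x p -> top_at x p' -> p = p'.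
Proof.
case=> H1 H2 [H1' H2']; case: (ltngtP p p') => E; last exact: val_inj.
- by have := H1 _ E; lia.
- by have := H1' _ E; lia.
Qed.

Lemma lower_upper_at x p p' : lower_at x p -> upper_at x p' -> False.
Proof. by case=> T E [T' O]; rewrite (top_at_inj T T') O in E. Qed.

Lemma lt_at_upper x y p : lt_at x y p -> upper_at y p.
Proof.
case=> Hxy [[Hafter Hp] Hev] Hyp; split; last by rewrite Hyp.
split; last by rewrite Hyp; lia.
by move=> i Hi; rewrite Hxy ?Hafter // neq_ltn Hi orbT.
Qed.

Lemma lt_at_chain x y z p p' : lt_at x y p -> lt_at y z p' -> False.
Proof. by move=> /lt_at_upper Hy [_ Hy' _]; apply: (lower_upper_at Hy' Hy). Qed.

Lemma lt_at_upper_uniq x y y' p p' : lt_at x y p -> lt_at x y' p' -> y = y'.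
Proof.
case=> Hxy [T _] Hyp [Hxy' [T' _] Hyp']; have E := top_at_inj T T'; subst p'.
apply/ffunP=> i; case: (eqVneq i p) => [->|Hi]; last by rewrite Hxy ?Hxy'.
by apply: val_inj; rewrite /= Hyp Hyp'.
Qed.

Lemma lt_at_lower_uniq x x' y p p' : lt_at x y p -> lt_at x' y p' -> x = x'.
Proof.
move=> L L'; have [[T _] [T' _]] := (lt_at_upper L, lt_at_upper L').
have E := top_at_inj T T'; subst p'; case: L L' => Hxy _ Hyp [Hxy' _ Hyp'].
apply/ffunP=> i; case: (eqVneq i p) => [->|Hi]; last by rewrite -Hxy ?Hxy'.
by apply: val_inj; move: Hyp'; rewrite Hyp => -[].
Qed.

Lemma leq_PP x y : leq_P x y <-> x = y \/ exists p, lt_at x y p.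
Proof.
split.
- case/orP=> [/orP[/eqP|]|]; first by left.
  + case/existsP=> l.
    case/andP=> /andP[/andP[/forallP Hbefore /eqP Hx] /eqP Hy] /forallP Hafter.
    right; exists l; split; last by rewrite Hx Hy.
    * move=> i Hi; case: (ltngtP i l) => Hil.
      - by apply/esym/eqP; have := Hbefore i; rewrite Hil.
      - by apply/esym; have := Hafter i; rewrite Hil /= => /andP[/eqP].
      - by move: Hi; rewrite (val_inj Hil) eqxx.
    * split; last by rewrite Hx.
      split; last by left; rewrite Hx.
      by move=> i Hi; have := Hafter i; rewrite Hi /= => /andP[_].
  + case/andP=> /existsP[i0 /andP[/andP[/eqP H0 /eqP Hx] /eqP Hy]] /forallP Hafter.
    have Hpos i : i != i0 -> 0 < i.
      by rewrite lt0n; apply: contra => /eqP Hi; apply/eqP/val_inj; rewrite /= Hi H0.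
    right; exists i0; split; last by rewrite Hx Hy.
    * by move=> i /Hpos Hi; apply/esym; have := Hafter i; rewrite Hi /= => /andP[/eqP].
    * split; last by rewrite Hx.
      split; last by right.
      by move=> i Hi; have := Hafter i; rewrite H0 in Hi; rewrite Hi /= => /andP[_].
- case=> [->|[p [Hxy [[Hafter Hp] Hev] Hyp]]]; first by rewrite /leq_P eqxx.
  have Hafter' (i : 'I_n) : p < i -> (x i == y i) && (x i < 2).
    by move=> Hi; rewrite Hxy ?eqxx ?Hafter // neq_ltn Hi orbT.
  have [Hx|Hx] : (x p : nat) = 0 \/ (x p : nat) = 2.
    by move: Hev (ltn_ord (x p)); case: (nat_of_ord (x p)) => [|[|[|[|?]]]]; auto.
  + have Hp0 : (p : nat) = 0 by case: Hp => //; rewrite Hx.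
    apply/orP; right; apply/andP; split.
    * by apply/existsP; exists p => /=; rewrite Hp0 Hx Hyp Hx.
    * by apply/forallP=> i; apply/implyP=> Hi; apply: Hafter'; rewrite Hp0.
  + apply/orP; left; apply/orP; right; apply/existsP; exists p.
    rewrite /= Hx Hyp Hx !andbT; apply/andP; split.
    * by apply/forallP=> i; apply/implyP=> Hi; rewrite Hxy // neq_ltn Hi.
    * by apply/forallP=> i; apply/implyP; apply: Hafter'.
Qed.

Lemma leq_P_lt_at x y : x != y -> leq_P x y -> exists p, lt_at x y p.
Proof. by move=> Hxy /leq_PP [E|//]; rewrite E eqxx in Hxy. Qed.

Lemma leq_P_refl : reflexive (@leq_P n).
Proof. by move=> x; rewrite /leq_P eqxx. Qed.

Lemma P_poset : is_poset (@leq_P n).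
Proof.
split; first exact: leq_P_refl.
- move=> x y /andP[/leq_PP [//|[p L]] /leq_PP [->//|[p' L']]].
  by case: (lt_at_chain L L').
- move=> y x z /leq_PP [->//|[p L]] /leq_PP [<-|[p' L']].
  + by apply/leq_PP; right; exists p.
  + by case: (lt_at_chain L L').
Qed.

Lemma leq_P_upper_uniq x y y' :
  x != y -> leq_P x y -> x != y' -> leq_P x y' -> y = y'.
Proof.
move=> /leq_P_lt_at/[apply] -[p L] /leq_P_lt_at/[apply] -[p' L'].
exact: lt_at_upper_uniq L L'.
Qed.

Lemma leq_P_lower_uniq x x' y :
  x != y -> leq_P x y -> x' != y -> leq_P x' y -> x = x'.
Proof.
move=> /leq_P_lt_at/[apply] -[p L] /leq_P_lt_at/[apply] -[p' L'].
exact: lt_at_lower_uniq L L'.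
Qed.

Lemma leq_P_no_chain x y z :
  x != y -> leq_P x y -> y != z -> leq_P y z -> False.
Proof.
move=> /leq_P_lt_at/[apply] -[p L] /leq_P_lt_at/[apply] -[p' L'].
exact: lt_at_chain L L'.
Qed.

Definition top_pos x : option 'I_n :=
  [pick j : 'I_n | (1 < x j) && [forall i : 'I_n, (j < i) ==> (x i < 2)]].
Definition one_pos x : option 'I_n := [pick i : 'I_n | (0 < i) && (x i == 1 :> nat)].

Lemma top_pos_at x p :
  1 < x p -> (forall i : 'I_n, p < i -> x i < 2) -> top_pos x = Some p.
Proof.
move=> Hp Hafter; rewrite /top_pos; case: pickP => [j /andP[Hj /forallP Hj_after]|/(_ p)].
- congr Some; case: (ltngtP p j) => E; last exact: val_inj.
  + by have := Hafter _ E; lia.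
  + by have := implyP (Hj_after p) E; lia.
- rewrite Hp /= => /negbT/forallPn[i]; rewrite negb_imply => /andP[/Hafter -> //].
Qed.

Lemma top_pos_none x : (forall i, x i < 2) -> top_pos x = None.
Proof.
by move=> Hx; rewrite /top_pos; case: pickP => [j /andP[Hj _]|//]; have := Hx j; lia.
Qed.

Lemma lt_at_top_pos x y p : lt_at x y p ->
  top_pos x = Some p /\ top_pos y = Some p
  \/ [/\ top_pos x = None, top_pos y = None & one_pos y = one_pos x].
Proof.
move=> L; have [[Hy_after Hyp] _] := lt_at_upper L.
case: L => Hxy [[Hx_after Hxp] Hev] Hyx.
have [Hx|Hx] : (x p : nat) = 0 \/ (x p : nat) = 2.
  by move: Hev (ltn_ord (x p)); case: (nat_of_ord (x p)) => [|[|[|[|?]]]]; auto.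
- have Hp0 : (p : nat) = 0 by case: Hxp => //; rewrite Hx.
  have Hlow (z : P n) : z p < 2 -> (forall i : 'I_n, p < i -> z i < 2) ->
      forall i, z i < 2.
    move=> Hzp Hz i; case: (eqVneq i p) => [->//|Hi]; apply: Hz.
    by move: Hi; rewrite -val_eqE /= Hp0; case: (nat_of_ord i).
  right; split; first (by apply/top_pos_none/Hlow; rewrite ?Hx).
  + by apply/top_pos_none/Hlow; rewrite ?Hyx ?Hx.
  + apply: eq_pick => i /=; case: (posnP i) => [//|Hi].
    by rewrite Hxy //; apply: contraTneq Hi => ->; rewrite Hp0.
- left; split; apply: top_pos_at => //; first by rewrite Hx.
  by rewrite Hyx Hx.
Qed.

Definition onehot (j : 'I_n) (c : nat) : P n :=
  [ffun i => if i == j then inord c else ord0].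

Lemma onehotE (j i : 'I_n) c : c < 4 -> (onehot j c i : nat) = if i == j then c else 0.
Proof. by move=> Hc; rewrite ffunE; case: eqP => _ //; rewrite inordK. Qed.

Lemma onehot_after (j i : 'I_n) c : c < 4 -> j < i -> (onehot j c i : nat) = 0.
Proof. by move=> Hc Hi; rewrite onehotE //; case: eqP => // E; rewrite E ltnn in Hi. Qed.

Lemma lt_at_onehot (j : 'I_n) : lt_at (onehot j 2) (onehot j 3) j.
Proof.
split; last by rewrite !onehotE // eqxx.
- by move=> i Hi; rewrite !ffunE (negbTE Hi).
- rewrite /lower_at /top_at onehotE // eqxx; split=> //; split; last by left.
  by move=> i Hi; rewrite onehot_after.
Qed.

Lemma top_pos_onehot (j : 'I_n) c : 1 < c < 4 -> top_pos (onehot j c) = Some j.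
Proof.
case/andP=> Hc1 Hc4; apply: top_pos_at; first by rewrite onehotE // eqxx.
by move=> i Hi; rewrite onehot_after.
Qed.

Lemma onehot1_lt2 (j i : 'I_n) : onehot j 1 i < 2.
Proof. by rewrite onehotE //; case: eqP. Qed.

Lemma one_pos_onehot (j : 'I_n) : 0 < j -> one_pos (onehot j 1) = Some j.
Proof.
move=> Hj; rewrite /one_pos; case: pickP => [i /andP[_]|/(_ j)].
  by rewrite onehotE //; case: (eqVneq i j) => [->|].
by rewrite /= onehotE // eqxx Hj.
Qed.

End OrderOfP.

Section Restriction.
Variables (k m : nat) (Hkm : k <= m).

Definition pad (s : P k) : P m :=
  [ffun i : 'I_m => if insub (val i) is Some j then s j else ord0].

Lemma pad_lo (s : P k) (i : 'I_m) (j : 'I_k) : val i = val j -> pad s i = s j.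
Proof.
move=> E; rewrite ffunE; case: insubP => [u _ Hu|]; last by rewrite E ltn_ord.
by congr (s _); apply: val_inj; rewrite Hu.
Qed.

Lemma pad_hi (s : P k) (i : 'I_m) : k <= i -> pad s i = ord0.
Proof. by move=> E; rewrite ffunE; case: insubP => [u|//]; rewrite ltnNge E. Qed.

Lemma pad_widen (s : P k) p : pad s (widen_ord Hkm p) = s p.
Proof. exact: pad_lo. Qed.

Lemma restr_pad (s : P k) : restr Hkm (pad s) = s.
Proof. by apply/ffunP=> i; rewrite ffunE pad_widen. Qed.

Lemma pad_after (s : P k) (p : 'I_k) (i : 'I_m) :
  (forall j : 'I_k, p < j -> s j < 2) -> widen_ord Hkm p < i -> pad s i < 2.
Proof.
move=> Hs Hi; case: (ltnP i k) => Hik; last by rewrite pad_hi.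
by rewrite (pad_lo _ (j := Ordinal Hik)) //; apply: Hs.
Qed.

Lemma lt_at_pad (s s' : P k) p :
  lt_at s s' p -> lt_at (pad s) (pad s') (widen_ord Hkm p).
Proof.
case=> Hss' [[Hafter Hp] Hev] Hsp; split; last by rewrite !pad_widen.
- move=> i Hi; case: (ltnP i k) => Hik; last by rewrite !pad_hi.
  rewrite !(pad_lo _ (j := Ordinal Hik)) //; apply: Hss'.
  by apply: contra Hi => /eqP E; apply/eqP/val_inj; rewrite /= -E.
- by rewrite /lower_at /top_at pad_widen; split=> //; split=> // i; apply: pad_after.
Qed.

Lemma lt_at_restr (x y : P m) (p : 'I_m) (Hp : p < k) :
  lt_at x y p -> lt_at (restr Hkm x) (restr Hkm y) (Ordinal Hp).
Proof.
have Ep : widen_ord Hkm (Ordinal Hp) = p by apply: val_inj.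
case=> Hxy [[Hafter Hxp] Hev] Hyp; split; last by rewrite !ffunE Ep.
- by move=> i Hi; rewrite !ffunE Hxy.
- rewrite /lower_at /top_at !ffunE Ep; split=> //; split=> // i Hi.
  by rewrite ffunE Hafter.
Qed.

Lemma restr_lt_at_eq (x y : P m) p : lt_at x y p -> k <= p -> restr Hkm x = restr Hkm y.
Proof.
case=> Hxy _ _ Hp; apply/ffunP=> i; rewrite !ffunE Hxy //.
by apply: contraTneq Hp => <- /=; rewrite -ltnNge.
Qed.

Lemma restr_quot : quotient_map (@leq_P m) (@leq_P k) (restr Hkm).
Proof.
split.
- by move=> s; exists (pad s); apply: restr_pad.
- move=> x y /leq_PP [->|[p L]]; first exact: leq_P_refl.
  case: (ltnP p k) => Hpk.
  + by apply/leq_PP; right; exists (Ordinal Hpk); apply: lt_at_restr.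
  + by rewrite (restr_lt_at_eq L Hpk); apply: leq_P_refl.
- move=> s s' /leq_PP [->|[p L]].
  + by exists (pad s'), (pad s'); rewrite restr_pad; split=> //; apply: leq_P_refl.
  + exists (pad s), (pad s'); rewrite !restr_pad; split=> //.
    by apply/leq_PP; right; exists (widen_ord Hkm p); apply: lt_at_pad.
Qed.

End Restriction.

Section Concatenation.
Variables k m : nat.

Definition catP (s : P k) (t : P m) : P (k + m) :=
  [ffun i => match split i with inl j => s j | inr j => t j end].
Definition tailP (z : P (k + m)) : P m := [ffun j => z (rshift k j)].

Lemma catP_lshift (s : P k) (t : P m) j : catP s t (lshift m j) = s j.
Proof. by rewrite ffunE -[lshift m j]/(unsplit (inl j)) unsplitK. Qed.

Lemma catP_rshift (s : P k) (t : P m) j : catP s t (rshift k j) = t j.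
Proof. by rewrite ffunE -[rshift k j]/(unsplit (inr j)) unsplitK. Qed.

Lemma restr_catP (H : k <= k + m) (s : P k) (t : P m) : restr H (catP s t) = s.
Proof.
apply/ffunP=> i; rewrite ffunE -(catP_lshift s t i); congr (catP s t _).
exact: val_inj.
Qed.

Lemma tailP_catP (s : P k) (t : P m) : tailP (catP s t) = t.
Proof. by apply/ffunP=> i; rewrite ffunE catP_rshift. Qed.

Lemma lt_at_catP_l (s s' : P k) (t : P m) p :
  lt_at s s' p -> (forall j, t j < 2) -> lt_at (catP s t) (catP s' t) (lshift m p).
Proof.
case=> Hss' [[Hafter Hp] Hev] Hsp Ht; split; last by rewrite !catP_lshift.
- move=> i Hi; rewrite !ffunE; case: splitP => j Ej //.
  by apply: Hss'; apply: contra Hi => /eqP E; apply/eqP/val_inj; rewrite /= Ej E.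
- rewrite /lower_at /top_at catP_lshift; split=> //; split=> // i Hi.
  by rewrite ffunE; case: splitP => j Ej //; apply: Hafter; rewrite -Ej.
Qed.

Lemma lt_at_catP_r (s : P k) (t t' : P m) j :
  lt_at t t' j -> (t j : nat) = 2 -> lt_at (catP s t) (catP s t') (rshift k j).
Proof.
case=> Htt' [[Hafter _] Hev] Htj Ht2; split; last by rewrite !catP_rshift.
- move=> i Hi; rewrite !ffunE; case: splitP => j' Ej //.
  by apply: Htt'; apply: contra Hi => /eqP E; apply/eqP/val_inj; rewrite /= Ej E.
- rewrite /lower_at /top_at catP_rshift Ht2; split=> //; split; last by left.
  move=> i Hi; rewrite ffunE; case: splitP => j' Ej.
  + by have := ltn_ord j'; move: Hi; rewrite Ej /=; lia.
  + by apply: Hafter; move: Hi; rewrite Ej /=; lia.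
Qed.

Lemma lt_at_split (H : k <= k + m) (z z' : P (k + m)) p : lt_at z z' p ->
  (exists p', [/\ lt_at (restr H z) (restr H z') p', tailP z = tailP z'
                & forall j, tailP z j < 2])
  \/ restr H z = restr H z' /\ exists j, lt_at (tailP z) (tailP z') j.
Proof.
move=> L; case: (ltnP p k) => Hpk.
- left; exists (Ordinal Hpk); split; first exact: lt_at_restr.
  + case: L => Hzz' _ _; apply/ffunP=> j; rewrite !ffunE Hzz' //.
    by apply/eqP=> /(congr1 val) /=; lia.
  + by case: L => _ [[Hafter _] _] _ j; rewrite ffunE; apply: Hafter => /=; lia.
- right; split; first exact: (restr_lt_at_eq H L).
  have Hj : p - k < m by have := ltn_ord p; lia.
  have Ep : rshift k (Ordinal Hj) = p by apply: val_inj => /=; lia.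
  exists (Ordinal Hj); case: L => Hzz' [[Hafter Hp] Hev] Hzp.
  split; last by rewrite !ffunE Ep.
  + move=> i Hi; rewrite !ffunE Hzz' //; apply: contra Hi => /eqP E.
    by apply/eqP/val_inj => /=; move/(congr1 val): E => /=; lia.
  + rewrite /lower_at /top_at ffunE Ep; split=> //; split.
    * by move=> i Hi; rewrite ffunE; apply: Hafter => /=; move: Hi => /=; lia.
    * by case: Hp; [left|right=> /=; lia].
Qed.

End Concatenation.

Section MonotoneSection.
Variables (Y B : finType) (leY : rel Y) (leB : rel B) (f : Y -> B) (y0 : Y).
Hypotheses (leY_refl : reflexive leY) (f_quot : quotient_map leY leB f).
Hypothesis leB_upper_uniq :
  forall a b b', a != b -> leB a b -> a != b' -> leB a b' -> b = b'.
Hypothesis leB_lower_uniq :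
  forall a a' b, a != b -> leB a b -> a' != b -> leB a' b -> a = a'.
Hypothesis leB_no_chain :
  forall a b c, a != b -> leB a b -> b != c -> leB b c -> False.

Lemma f_mono x y : leY x y -> leB (f x) (f y).
Proof. by case: f_quot => _ Hmono _; apply: Hmono. Qed.

Definition lift_pair (a b : B) : Y * Y :=
  odflt (y0, y0) [pick q : Y * Y | leY q.1 q.2 && (f q.1 == a) && (f q.2 == b)].

Lemma lift_pairP a b : leB a b ->
  [/\ leY (lift_pair a b).1 (lift_pair a b).2, f (lift_pair a b).1 = a
    & f (lift_pair a b).2 = b].
Proof.
move=> Hab; rewrite /lift_pair.
case: pickP => [q /andP[/andP[Hq /eqP Hq1] /eqP Hq2]|Hnone] //.
case: f_quot => _ _ /(_ _ _ Hab) [x [y [Hxy Hx Hy]]].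
by move: (Hnone (x, y)); rewrite /= Hxy Hx Hy !eqxx.
Qed.

Definition preimage (a : B) : Y := odflt y0 [pick y | f y == a].

Lemma preimageK a : f (preimage a) = a.
Proof.
rewrite /preimage; case: pickP => [y /eqP //|Hnone].
case: f_quot => /(_ a) [y Hy] _ _.
by move: (Hnone y); rewrite Hy eqxx.
Qed.

Definition mono_section (a : B) : Y :=
  if [pick b | (a != b) && leB a b] is Some b then (lift_pair a b).1
  else if [pick b | (b != a) && leB b a] is Some b then (lift_pair b a).2
  else preimage a.

Lemma mono_sectionK a : f (mono_section a) = a.
Proof.
rewrite /mono_section; case: pickP => [b /andP[_ Hab]|_].
  by case: (lift_pairP Hab).
case: pickP => [b /andP[_ Hba]|_]; last exact: preimageK.
by case: (lift_pairP Hba).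
Qed.

Lemma mono_section_lower a b : a != b -> leB a b -> mono_section a = (lift_pair a b).1.
Proof.
move=> Hn Hab; rewrite /mono_section; case: pickP => [b' /andP[Hn' Hab']|/(_ b)].
- by rewrite (leB_upper_uniq Hn' Hab' Hn Hab).
- by rewrite Hn Hab.
Qed.

Lemma mono_section_upper a b : a != b -> leB a b -> mono_section b = (lift_pair a b).2.
Proof.
move=> Hn Hab; rewrite /mono_section; case: pickP => [c /andP[Hbc Hbc']|_].
  by case: (leB_no_chain Hn Hab Hbc Hbc').
case: pickP => [a' /andP[Hn' Ha'b]|/(_ a)]; last by rewrite Hn Hab.
by rewrite (leB_lower_uniq Hn' Ha'b Hn Hab).
Qed.

Lemma mono_section_mono a b : leB a b -> leY (mono_section a) (mono_section b).
Proof.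
move=> Hab; case: (eqVneq a b) => [<-|Hn]; first exact: leY_refl.
rewrite (mono_section_lower Hn Hab) (mono_section_upper Hn Hab).
by case: (lift_pairP Hab).
Qed.

Definition mono_section_through (q : Y * Y) (a : B) : Y :=
  if leY q.1 q.2 && (f q.1 != f q.2) then
    if a == f q.1 then q.1 else if a == f q.2 then q.2 else mono_section a
  else mono_section a.

Lemma mono_section_throughK q a : f (mono_section_through q a) = a.
Proof.
rewrite /mono_section_through; case: ifP => _; last exact: mono_sectionK.
by case: eqP => [->//|_]; case: eqP => [->//|_]; apply: mono_sectionK.
Qed.

Lemma mono_section_through_fst q :
  leY q.1 q.2 -> f q.1 != f q.2 -> mono_section_through q (f q.1) = q.1.
Proof. by move=> Hq Hn; rewrite /mono_section_through Hq Hn eqxx. Qed.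

Lemma mono_section_through_snd q :
  leY q.1 q.2 -> f q.1 != f q.2 -> mono_section_through q (f q.2) = q.2.
Proof. by move=> Hq Hn; rewrite /mono_section_through Hq Hn eqxx eq_sym (negbTE Hn). Qed.

Lemma mono_section_through_mono q a b :
  leB a b -> leY (mono_section_through q a) (mono_section_through q b).
Proof.
move=> Hab; rewrite /mono_section_through.
case: ifP => [/andP[Hq Hn]|_]; last exact: mono_section_mono.
case: (eqVneq a b) => [<-|Hnab]; first exact: leY_refl.
have Hq' := f_mono Hq.
case: (eqVneq a (f q.1)) => [Ha1|Ha1].
  have Eb : b = f q.2 by apply: (leB_upper_uniq Hnab Hab); rewrite Ha1.
  by rewrite Eb [f q.2 == _]eq_sym (negbTE Hn) eqxx.
case: (eqVneq a (f q.2)) => [Ha2|_].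
  by exfalso; apply: (leB_no_chain Hn Hq' (c := b)); rewrite -Ha2.
case: (eqVneq b (f q.1)) => [Hb1|_].
  by exfalso; apply: (leB_no_chain Hnab Hab (c := f q.2)); rewrite Hb1.
case: (eqVneq b (f q.2)) => [Hb2|_]; last exact: mono_section_mono.
by move: Ha1; rewrite (leB_lower_uniq Hnab Hab (a' := f q.1)) ?eqxx // Hb2.
Qed.

End MonotoneSection.

Section Amalgamation.
Variables (k : nat) (Y : finType) (leY : rel Y) (f : Y -> P k) (y0 : Y).
Hypotheses (leY_refl : reflexive leY) (f_quot : quotient_map leY (@leq_P k) f).

Local Notation section := (mono_section leY (@leq_P k) f y0).
Local Notation section_through := (mono_section_through leY (@leq_P k) f y0).

(* Positions [1 .. m-1] of the new coordinates enumerate the pairs of [Y];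
   position 0 is left unused because tails differing only there are comparable. *)
Let m := #|{: Y * Y}|.+1.

Implicit Types (s : P k) (t : P m).

Definition code_pair (i : 'I_m) : Y * Y := nth (y0, y0) (enum {: Y * Y}) i.-1.

Lemma code_pair_surj q : exists2 i : 'I_m, 0 < i & code_pair i = q.
Proof.
have Hi : (index q (enum {: Y * Y})).+1 < m by rewrite ltnS cardE index_mem mem_enum.
by exists (Ordinal Hi); rewrite // /code_pair /= nth_index ?mem_enum.
Qed.

Definition fibre_pair (j : 'I_m) (s : P k) : Y * Y :=
  let q := code_pair j in
  if leY q.1 q.2 && (f q.1 == s) && (f q.2 == s) then q else (section s, section s).

Lemma fibre_pairP j s :
  [/\ leY (fibre_pair j s).1 (fibre_pair j s).2,
      f (fibre_pair j s).1 = s & f (fibre_pair j s).2 = s].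
Proof.
rewrite /fibre_pair; case: ifP => [/andP[/andP[Hq /eqP Hq1] /eqP Hq2]|_] //=.
by rewrite mono_sectionK.
Qed.

Lemma fibre_pairE j s : let q := code_pair j in
  leY q.1 q.2 -> f q.1 = s -> f q.2 = s -> fibre_pair j s = q.
Proof. by move=> q Hq Hq1 Hq2; rewrite /fibre_pair -/q Hq Hq1 Hq2 eqxx. Qed.

Definition lift (s : P k) (t : P m) : Y :=
  if top_pos t is Some j then
    if odd (t j) then (fibre_pair j s).2 else (fibre_pair j s).1
  else if one_pos t is Some i then section_through (code_pair i) s
  else section s.

Lemma liftK s t : f (lift s t) = s.
Proof.
rewrite /lift; case: (top_pos t) => [j|].
  by case: (fibre_pairP j s) => _ H1 H2; case: ifP.
by case: (one_pos t) => [i|]; [apply: mono_section_throughK | apply: mono_sectionK].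
Qed.

Lemma lift_mono_l s s' t :
  leq_P s s' -> (forall j, t j < 2) -> leY (lift s t) (lift s' t).
Proof.
move=> Hss' Ht; rewrite /lift top_pos_none //; case: (one_pos t) => [i|].
- apply: mono_section_through_mono => //;
    [exact: leq_P_upper_uniq|exact: leq_P_lower_uniq|exact: leq_P_no_chain].
- apply: mono_section_mono => //;
    [exact: leq_P_upper_uniq|exact: leq_P_lower_uniq|exact: leq_P_no_chain].
Qed.

Lemma lift_mono_r s t t' j : lt_at t t' j -> leY (lift s t) (lift s t').
Proof.
move=> L; rewrite /lift; case: (lt_at_top_pos L) => [[-> ->]|[-> -> ->]].
- have [_ Hodd] := lt_at_upper L; case: L => _ [_ Hev] _.
  by rewrite Hodd (negbTE Hev); case: (fibre_pairP j s).
- exact: leY_refl.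
Qed.

Lemma lift_onehot2 (j : 'I_m) s : lift s (onehot j 2) = (fibre_pair j s).1.
Proof. by rewrite /lift top_pos_onehot // onehotE // eqxx. Qed.

Lemma lift_onehot3 (j : 'I_m) s : lift s (onehot j 3) = (fibre_pair j s).2.
Proof. by rewrite /lift top_pos_onehot // onehotE // eqxx. Qed.

Lemma lift_onehot1 (i : 'I_m) s :
  0 < i -> lift s (onehot i 1) = section_through (code_pair i) s.
Proof.
by move=> Hi; rewrite /lift top_pos_none ?one_pos_onehot //; apply: onehot1_lt2.
Qed.

Lemma amalgamation : exists (Hkl : k < k + m) (g : P (k + m) -> Y),
  quotient_map (@leq_P (k + m)) leY g /\ forall z, f (g z) = restr (ltnW Hkl) z.
Proof.
have Hkl : k < k + m by rewrite -addn1 leq_add2l.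
exists Hkl, (fun z => lift (restr (ltnW Hkl) z) (tailP z)).
split=> [|z]; last exact: liftK.
split.
- move=> y; have [j _ Ej] := code_pair_surj (y, y).
  exists (catP (f y) (onehot j 2)).
  by rewrite restr_catP tailP_catP lift_onehot2 fibre_pairE Ej.
- move=> z z' /leq_PP [->|[p L]]; first exact: leY_refl.
  case: (lt_at_split (ltnW Hkl) L) => [[p' [L' -> Ht]]|[-> [j L']]].
  + by apply: lift_mono_l => //; apply/leq_PP; right; exists p'.
  + exact: lift_mono_r L'.
- move=> y y' Hyy'; have [i Hi Ei] := code_pair_surj (y, y').
  case: (eqVneq (f y) (f y')) => Hff'.
  + exists (catP (f y) (onehot i 2)), (catP (f y) (onehot i 3)).
    rewrite !restr_catP !tailP_catP lift_onehot2 lift_onehot3 fibre_pairE Ei //.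
    split=> //; apply/leq_PP; right; exists (rshift k i).
    by apply: lt_at_catP_r; [apply: lt_at_onehot | rewrite onehotE // eqxx].
  + exists (catP (f y) (onehot i 1)), (catP (f y') (onehot i 1)).
    rewrite !restr_catP !tailP_catP !lift_onehot1 // Ei.
    rewrite mono_section_through_fst ?mono_section_through_snd //; split=> //.
    have [p L] := leq_P_lt_at Hff' (f_mono f_quot Hyy').
    apply/leq_PP; right; exists (lshift m p).
    by apply: lt_at_catP_l => // j; apply: onehot1_lt2.
Qed.

End Amalgamation.

Lemma quotient_map_P0 (T : finType) (le : rel T) (g : T -> P 0) :
  reflexive le -> 0 < #|T| -> quotient_map le (@leq_P 0) g.
Proof.
move=> Hrefl /card_gt0P[t0 _].
have P0_eq (a b : P 0) : a = b by apply/ffunP=> -[].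
split=> [a|x y _|a b _]; first by exists t0.
- by rewrite (P0_eq (g y) (g x)) leq_P_refl.
- by exists t0, t0.
Qed.

Lemma P_amalgamation (k : nat) (Y : finType) (leY : rel Y) (f : Y -> P k) :
  reflexive leY -> quotient_map leY (@leq_P k) f ->
  exists (l : nat) (Hkl : k < l) (g : P l -> Y),
    quotient_map (@leq_P l) leY g /\ forall z : P l, f (g z) = restr (ltnW Hkl) z.
Proof.
move=> Hrefl Hf; case: (Hf) => /(_ [ffun=> ord0]) [y0 _] _ _.
have [Hkl [g Hg]] := amalgamation y0 Hrefl Hf.
by exists (k + #|{: Y * Y}|.+1), Hkl, g.
Qed.

Theorem mainTheorem3 :
  (* the P_n are finite posets and the bonding maps are quotient maps *)
  (forall n : nat, is_poset (@leq_P n)) /\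
  (forall (k m : nat) (H : k <= m),
     quotient_map (@leq_P m) (@leq_P k) (restr H)) /\
  (* (U) *)
  (forall (T : finType) (le : rel T), is_poset le -> 0 < #|T| ->
     exists (n : nat) (phi : P n -> T), quotient_map (@leq_P n) le phi) /\
  (* (A) *)
  (forall (k : nat) (Y : finType) (leY : rel Y) (f : Y -> P k),
     is_poset leY -> quotient_map leY (@leq_P k) f ->
     exists (l : nat) (Hkl : k < l) (g : P l -> Y),
       quotient_map (@leq_P l) leY g /\
       (forall z : P l, f (g z) = restr (ltnW Hkl) z)).
Proof.
split; first exact: P_poset.
split; first exact: restr_quot.
split=> [T le [Hrefl _ _] HT | k Y leY f [Hrefl _ _]]; last exact: P_amalgamation.
have Hf := quotient_map_P0 (fun _ => [ffun=> ord0]) Hrefl HT.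
by have [l [_ [g [Hg _]]]] := P_amalgamation Hrefl Hf; exists l, g.
Qed.
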